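(* Let $n\ge3$ be an odd integer and let $x\in\mathcal{D}_n$ have order $m$. Then the degree of $x$ in $OD(\mathcal{D}_n)$ is $$\deg(x)=\begin{cases} m-2\phi(m)+\sum_{\lambda\mid\frac{n}{m}}\phi(\lambda m), & m>2,\\ 2n-1, & m=1,\\ 1, & m=2,\end{cases}$$ where $\phi$ is Euler's totient function.
   Context: The dihedral group $\mathcal{D}_n$ ($n\ge3$) is the group $\langle a,b\mid a^n=b^2=(ab)^2=e\rangle$ of order $2n$. For a finite group $G$, $o(x)$ denotes the order of $x\in G$. The order-divisor graph $OD(G)$ is the simple undirected graph with vertex set $G$, in which two distinct vertices $x,y$ are adjacent if and only if $o(x)\neq o(y)$ and either $o(x)\mid o(y)$ or $o(y)\mid o(x)$. *)

From mathcomp Require Import all_boot all_order all_algebra all_fingroup all_solvable.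
Set Implicit Arguments. Unset Strict Implicit. Unset Printing Implicit Defensive.

Definition od_adj (gT : finGroupType) (x y : gT) : bool :=
  [&& x != y, #[x]%g != #[y]%g & (#[x]%g %| #[y]%g) || (#[y]%g %| #[x]%g)].

Definition od_deg (gT : finGroupType) (G : {set gT}) (x : gT) : nat :=
  #|[set y in G | od_adj x y]|.

From mathcomp Require Import all_boot all_order all_algebra all_fingroup all_solvable.
From mathcomp Require Import zify.
Set Implicit Arguments. Unset Strict Implicit. Unset Printing Implicit Defensive.

(* For odd n the rotations of D_n form a cyclic subgroup <[r]> of odd order n,
   and every reflection is an involution.  An involution is then adjacent only
   to the identity, and the identity to every other element.  A rotation of
   order m > 2 is adjacent exactly to the rotations whose order d <> m divides
   or is a multiple of m; since a cyclic group has phi(d) elements of order d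
   for each divisor d of its order, its degree is
   sum_(d | m) phi(d) + sum_(m | d | n) phi(d) - 2 phi(m), where the first sum
   is m. *)

Local Open Scope group_scope.

Section CyclicOrderCount.

Variables (gT : finGroupType) (a : gT).

Lemma order_expg_div d : (d %| #[a])%N -> #[a ^+ (#[a] %/ d)] = d.
Proof.
move=> d_dv_a; have d_gt0 := dvdn_gt0 (order_gt0 a) d_dv_a.
by rewrite orderXdiv ?dvdn_div // divnA // mulKn ?order_gt0.
Qed.

Lemma card_cycle_order d : (d %| #[a])%N ->
  #|[set y in <[a]> | #[y] == d]| = totient d.
Proof.
move=> d_dv_a; have ob := order_expg_div d_dv_a; set b := a ^+ _ in ob.
rewrite -{2}ob totient_gen; apply: eq_card => y; rewrite !inE /generator -ob.
have sba : <[b]> \subset <[a]> by rewrite cycle_subG mem_cycle.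
case ya: (y \in <[a]>) => /=.
  by rewrite (eq_subG_cyclic (cycle_cyclic a)) // ?cycle_subG // -!orderE.
by apply/esym/negbTE; apply: contraFN ya => /eqP E; rewrite -cycle_subG -E.
Qed.

Lemma card_cycle_orderP (P : pred nat) :
  #|[set y in <[a]> | P #[y]]| = (\sum_(d <- divisors #[a] | P d) totient d)%N.
Proof.
have cardE (Q : pred gT) : #|[set y in <[a]> | Q y]| = (\sum_y (Q y && (y \in <[a]>)))%N.
  by rewrite -sum1dep_card big_mkcond; apply: eq_bigr => y _; rewrite andbC; case: ifP.
rewrite big_seq_cond.
under eq_bigr => d /andP[d_a _].
  rewrite -dvdn_divisors ?order_gt0 // in d_a.
  rewrite -(card_cycle_order d_a) cardE; over.
rewrite -big_seq_cond cardE exchange_big /=; apply: eq_bigr => y _.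
have [ya | _] := boolP (y \in <[a]>); last by rewrite andbF big1 // => d _; rewrite andbF.
have y_a : #[y] \in divisors #[a] by rewrite -dvdn_divisors ?order_gt0 ?order_dvdG.
rewrite andbT big_mkcond (bigD1_seq #[y]) ?divisors_uniq //= eqxx andbT big1 ?addn0 //.
by move=> d; rewrite eq_sym => /negbTE->; rewrite if_same.
Qed.

End CyclicOrderCount.

Local Close Scope group_scope.

Lemma sum_totient_divisors m : 0 < m -> \sum_(d <- divisors m) totient d = m.
Proof.
case: m => // k _; have := card_cycle_orderP (Zp1 : 'I_k.+1) predT.
rewrite order_Zp1 => <-; rewrite -[RHS](order_Zp1 k) orderE.
by apply: eq_card => y; rewrite !inE andbT.
Qed.

Lemma sum_comparable_split (s : seq nat) m (F : nat -> nat) : uniq s -> m \in s ->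
  \sum_(d <- s | (d != m) && ((d %| m) || (m %| d))) F d + 2 * F m =
  \sum_(d <- s | d %| m) F d + \sum_(d <- s | m %| d) F d.
Proof.
move=> s_uniq m_s.
have -> : F m = \sum_(d <- s) (d == m) * F d.
  by rewrite (bigD1_seq m) //= eqxx mul1n big1 ?addn0 // => d /negbTE->.
rewrite big_distrr (big_mkcond (fun d => (d != m) && _)).
rewrite (big_mkcond (dvdn^~ m)) (big_mkcond (dvdn m)) -!big_split /=.
apply: eq_bigr => d _.
have [-> | ne_dm] := eqVneq d m; first by rewrite dvdnn /= mul1n addnn mul2n.
rewrite /= mul0n muln0 addn0.
case dm: (d %| m); case md: (m %| d) => /=; rewrite ?addn0 //.
by move: ne_dm; rewrite eqn_dvd dm md.
Qed.

Lemma sum_divisors_dvdn n m (F : nat -> nat) : 0 < n -> m %| n ->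
  \sum_(d <- divisors n | d %| m) F d = \sum_(d <- divisors m) F d.
Proof.
move=> n_gt0 m_dv_n; have m_gt0 := dvdn_gt0 n_gt0 m_dv_n.
rewrite -big_filter; apply/perm_big/uniq_perm; rewrite ?filter_uniq ?divisors_uniq //.
move=> d; rewrite mem_filter -!dvdn_divisors // andb_idr // => d_dv_m.
exact: dvdn_trans d_dv_m m_dv_n.
Qed.

Lemma sum_divisors_multiple n m (F : nat -> nat) : 0 < n -> m %| n ->
  \sum_(d <- divisors n | m %| d) F d = \sum_(l <- divisors (n %/ m)) F (l * m).
Proof.
move=> n_gt0 m_dv_n; have m_gt0 := dvdn_gt0 n_gt0 m_dv_n.
have nm_gt0 : 0 < n %/ m by rewrite divn_gt0 // dvdn_leq.
rewrite -big_filter -(big_map (fun l => l * m) xpredT).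
apply/perm_big/uniq_perm; rewrite ?filter_uniq ?divisors_uniq //.
  by rewrite map_inj_uniq ?divisors_uniq // => k l /eqP; rewrite eqn_pmul2r // => /eqP.
move=> d; rewrite mem_filter -dvdn_divisors //; apply/andP/mapP => [[md dn] | [l]].
  by exists (d %/ m); rewrite ?divnK // -dvdn_divisors // dvdn_divLR // divnK.
by rewrite -dvdn_divisors // => ln ->; rewrite dvdn_mull // -(divnK m_dv_n) dvdn_pmul2r.
Qed.

Lemma sum_totient_comparable n m : 0 < n -> m %| n ->
  \sum_(d <- divisors n | (d != m) && ((d %| m) || (m %| d))) totient d + 2 * totient m =
  m + \sum_(l <- divisors (n %/ m)) totient (l * m).
Proof.
move=> n_gt0 m_dv_n; have m_gt0 := dvdn_gt0 n_gt0 m_dv_n.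
rewrite sum_comparable_split ?divisors_uniq -?dvdn_divisors //.
by rewrite sum_divisors_dvdn // sum_totient_divisors // sum_divisors_multiple.
Qed.

Local Open Scope group_scope.

Lemma expg2_mul_inverting (gT : finGroupType) (r s a : gT) :
  s ^+ 2 = 1 -> r ^ s = r^-1 -> a \in <[r]> -> (a * s) ^+ 2 = 1.
Proof.
move=> s2 rs /cycleP[i ->]; have sV : s^-1 = s by apply/eqP; rewrite eq_invg_mul -expg2 s2.
have : (r ^+ i) ^ s = (r ^+ i)^-1 by rewrite conjXg rs expgVn.
by rewrite conjgE sV expgS expg1 -!mulgA => ->; rewrite mulgV.
Qed.

Lemma dihedral_rotation n : 1 < n ->
  exists2 r : 'D_(n.*2), #[r] = n & forall y, y \notin <[r]> -> #[y] = 2.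
Proof.
move=> n_gt1; have := Grp_dihedral n_gt1 ('D_(n.*2))%G.
rewrite homg_refl => /esym/existsP[[r s]] /= /eqP[defD rn s2 rs].
have nRS : <[s]> \subset 'N(<[r]>) by rewrite cycle_subG inE -cycleJ rs cycleV.
rewrite norm_joinEr // in defD.
have r_dv_n : #[r] %| n by rewrite order_dvdn rn.
have s_le2 : #[s] <= 2 by apply: dvdn_leq; rewrite // order_dvdn s2.
have card_RS : n * 2 <= #[r] * #[s].
  have := mul_cardG <[r]> <[s]>; rewrite /= defD card_dihedral // -!orderE => ->.
  by rewrite mulnC mul2n leq_pmulr ?cardG_gt0.
have r_eq_n : #[r] = n.
  apply/eqP; rewrite eqn_leq dvdn_leq ?(leq_trans _ n_gt1) //=.
  by rewrite -(leq_pmul2r (isT : 0 < 2)) (leq_trans card_RS) ?leq_mul2l ?s_le2 ?orbT.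
exists r => // y; have : y \in <[r]> * <[s]> by rewrite defD inE.
case/mulsgP => a b ra /cycleP[k ->] -> {y} not_rs.
rewrite -(expg_mod _ s2) in not_rs *; have : k %% 2 < 2 by rewrite ltn_mod.
case: (k %% 2) not_rs => [|[|//]] not_rs _; first by rewrite mulg1 ra in not_rs.
rewrite expg1 in not_rs *.
apply/eqP; rewrite eqn_leq dvdn_leq ?order_dvdn ?(expg2_mul_inverting s2 rs ra) //.
by rewrite order_gt1; apply: contraNneq not_rs => ->; apply: group1.
Qed.

Lemma od_adjE (gT : finGroupType) (x y : gT) :
  od_adj x y = (#[x] != #[y]) && ((#[x] %| #[y])%N || (#[y] %| #[x])%N).
Proof. by rewrite /od_adj; case: eqVneq => [-> | //]; rewrite eqxx. Qed.

Lemma od_deg1 (gT : finGroupType) (G : {group gT}) : od_deg G 1 = #|G|.-1.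
Proof.
rewrite (cardsD1 1 G) group1 add1n /od_deg /=; apply: eq_card => y.
by rewrite !inE od_adjE order1 dvd1n eq_sym order_eq1 andbC andbT.
Qed.

Lemma odd_dvdn2 d : odd d -> (d %| 2)%N = (d == 1%N).
Proof.
move=> odd_d; apply/idP/eqP => [d_dv_2 | -> //].
by have := dvdn_leq (isT : (0 < 2)%N) d_dv_2; case: d odd_d d_dv_2 => [|[|[|]]].
Qed.

Section OddCycleWithInvolutions.

Variables (gT : finGroupType) (G : {group gT}) (r : gT).
Hypotheses (odd_r : odd #[r]) (rG : r \in G).
Hypothesis involution_out : {in G, forall y, y \notin <[r]> -> #[y] = 2%N}.

Lemma odd_order_cycle y : y \in <[r]> -> odd #[y].
Proof. by move/order_dvdG; rewrite -orderE => /dvdn_odd; apply. Qed.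

Lemma od_deg_cycle x : x \in <[r]> -> (2 < #[x])%N ->
  od_deg G x =
    (\sum_(d <- divisors #[r] | (d != #[x]) && ((d %| #[x]) || (#[x] %| d))) totient d)%N.
Proof.
move=> xr x_gt2; rewrite -card_cycle_orderP /od_deg; apply: eq_card => y.
rewrite !inE od_adjE eq_sym orbC; have [yr | nyr] := boolP (y \in <[r]>).
  by rewrite andTb (subsetP _ y yr) // cycle_subG.
have [yG | //] := boolP (y \in G); rewrite involution_out // dvdn2 odd_order_cycle //=.
have x_ndv_2 : ~~ (#[x] %| 2)%N.
  by apply: contraTN x_gt2 => /dvdn_leq; rewrite -leqNgt; apply.
by rewrite (negbTE x_ndv_2) andbF.
Qed.

Lemma od_deg_involution x : #[x] = 2%N -> od_deg G x = 1%N.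
Proof.
move=> ox; rewrite -(cards1 (1 : gT)) /od_deg; apply: eq_card => y.
rewrite !inE od_adjE ox; have [yr | nyr] := boolP (y \in <[r]>).
  have odd_y := odd_order_cycle yr.
  rewrite (subsetP _ y yr) ?cycle_subG // dvdn2 odd_y odd_dvdn2 // -order_eq1 /=.
  by rewrite andb_idl // => /eqP->.
have -> : (y == 1) = false by apply: contraNF nyr => /eqP->; apply: group1.
by have [yG | //] := boolP (y \in G); rewrite involution_out // eqxx.
Qed.

End OddCycleWithInvolutions.

Local Close Scope group_scope.
Local Open Scope ring_scope.

Theorem mainTheorem17 (n : nat) (x : 'D_(n.*2)) (m : nat) :
  (3 <= n)%N -> odd n -> #[x]%g = m ->
  [/\ (2 < m)%N ->
        (od_deg ('D_(n.*2))%g x)%:Z =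
          m%:Z - 2 * (totient m)%:Z
          + (\sum_(l <- divisors (n %/ m)) totient (l * m))%N%:Z,
      m = 1%N -> od_deg ('D_(n.*2))%g x = (2 * n - 1)%N
    & m = 2%N -> od_deg ('D_(n.*2))%g x = 1%N].
Proof.
move=> n_ge3 odd_n ox; have n_gt1 : (1 < n)%N by apply: leq_trans n_ge3.
have [r or_n involution_out] := dihedral_rotation n_gt1.
have odd_r : odd #[r]%g by rewrite or_n.
have rD : r \in ('D_(n.*2))%g by rewrite inE.
have invD : {in ('D_(n.*2))%g, forall y, y \notin <[r]>%g -> #[y]%g = 2%N}.
  by move=> y _; apply: involution_out.
split=> [m_gt2 | m1 | m2].
- have xr : x \in <[r]>%g.
    by apply: contraTT m_gt2 => /involution_out; rewrite ox => ->.
  have m_dv_n : (m %| n)%N by rewrite -ox; move: (order_dvdG xr); rewrite -orderE or_n.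
  rewrite (od_deg_cycle odd_r rD invD) ?ox ?or_n //.
  have := sum_totient_comparable (ltnW n_gt1) m_dv_n; lia.
- have -> : x = 1%g by apply/eqP; rewrite -order_eq1 ox m1.
  by rewrite od_deg1 card_dihedral //; lia.
- by rewrite (od_deg_involution odd_r rD invD) // ox.
Qed.
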